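(* Let $U\in\mathrm{St}(r,n)$ and suppose $\Psi^{-1}U=P\begin{bsmallmatrix}K_r\\ O_{n-r,r}\end{bsmallmatrix}$ with $P\in\mathbb{C}^{n\times n}$ unitary and $K_r\in\mathbb{C}^{r\times r}$ invertible. Then there is a unitary matrix $W_P\in\mathbb{C}^{r\times r}$ such that $K_r=(\Sigma_{11}^P)^{-1/2}W_P$. Moreover, for any orthogonal $W\in\mathbb{R}^{r\times r}$, $\Psi P\begin{bsmallmatrix}(\Sigma_{11}^P)^{-1/2}W_PW\\ O_{n-r,r}\end{bsmallmatrix}=UW\in\mathrm{St}(r,n)$.
   Context: $\mathrm{St}(r,n):=\{X\in\mathbb{R}^{n\times r}\mid X^{\top}X=I_r\}$, $1\le r\le n-1$. $\Psi\in\mathbb{C}^{n\times n}$ is an invertible matrix whose columns are unit-norm (generalized) eigenvectors of a real matrix $A\in\mathbb{R}^{n\times n}$. For unitary $P$, $\Sigma^P:=P^{\dagger}\Psi^{\dagger}\Psi P$ and $\Sigma_{11}^P\in\mathbb{C}^{r\times r}$ is its upper-left $r\times r$ block (a positive definite Hermitian matrix); $(\Sigma_{11}^P)^{-1/2}$ is its inverse Hermitian positive definite square root. *)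

From HB Require Import structures.
From mathcomp Require Import all_boot all_order all_algebra.
From mathcomp Require Export sesquilinear spectral.
Set Implicit Arguments. Unset Strict Implicit. Unset Printing Implicit Defensive.
Import Order.TTheory GRing.Theory Num.Theory.
Local Open Scope ring_scope.
Local Open Scope sesquilinear_scope.

(* C : numClosedFieldType plays the role of the complex numbers; its real
   elements (Num.real) play the role of R.  Conjugate transpose: M ^t*. *)

Section Defs.
Variable C : numClosedFieldType.

Definition stiefel (r n : nat) (X : 'M[C]_(n, r)) : Prop :=
  X \is a realmx /\ X^T *m X = 1%:M.

Definition gen_eigenvector n (A : 'M[C]_n) (v : 'cV[C]_n) : Prop :=
  v != 0 /\ exists (l : C) (k : nat), ((A - l%:M) ^+ k.+1) *m v = 0.

Definition unit_normcv n (v : 'cV[C]_n) : Prop := v ^t* *m v = 1%:M.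

Definition herm_posdef n (S : 'M[C]_n) : Prop :=
  S ^t* = S /\ forall v : 'cV[C]_n, v != 0 -> 0 < (v ^t* *m S *m v) 0 0.

Definition inv_sqrtmx n (M S : 'M[C]_n) : Prop :=
  herm_posdef S /\ S *m S = invmx M.

Definition SigmaP r m (Psi P : 'M[C]_(r + m)) : 'M[C]_(r + m) :=
  P ^t* *m Psi ^t* *m Psi *m P.

Definition Sigma11P r m (Psi P : 'M[C]_(r + m)) : 'M[C]_r :=
  ulsubmx (SigmaP Psi P).

End Defs.

From HB Require Import structures.
From mathcomp Require Import all_boot all_order all_algebra.
From mathcomp Require Import sesquilinear spectral.
Import Order.TTheory GRing.Theory Num.Theory.
Local Open Scope ring_scope.
Local Open Scope sesquilinear_scope.

(* Writing U = Psi P [K; 0], orthonormality of U reads K^* Sigma_11^P K = 1,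
   i.e. (Sigma_11^P)^-1 = K K^*.  Hence, with S = (Sigma_11^P)^(-1/2) Hermitian,
   (S^-1 K)(S^-1 K)^* = S^-1 (S S) S^-1 = 1, so W_P := S^-1 K is unitary and
   K = S W_P.  The second claim is then U W = Psi P [K W; 0], and right
   multiplication by a real orthogonal W preserves St(r, n). *)

Section MatrixRing.
Context {R : comUnitRingType}.

Lemma mul_row_mx0_col_mx0 p q r1 m1 r2 m2 (A : 'M[R]_(p, r1))
    (M : 'M[R]_(r1 + m1, r2 + m2)) (B : 'M[R]_(r2, q)) :
  row_mx A 0 *m M *m col_mx B 0 = A *m ulsubmx M *m B.
Proof.
rewrite -[M in LHS]submxK mul_row_block !mul0mx !addr0.
by rewrite mul_row_col mulmx0 addr0.
Qed.

Lemma mulmx1_sandwich n (L M K : 'M[R]_n) :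
  L *m M *m K = 1%:M -> M *m (K *m L) = 1%:M.
Proof. by move=> LMK; rewrite mulmxA; apply: mulmx1C; rewrite mulmxA. Qed.

Lemma invmx_mulmx1 n (A B : 'M[R]_n) : A *m B = 1%:M -> invmx A = B.
Proof.
move=> AB; have [Au _] := mulmx1_unit AB.
by rewrite -[RHS](mulKmx Au) AB mulmx1.
Qed.

End MatrixRing.

Section ComplexMatrices.
Context {C : numClosedFieldType}.

Lemma realmx_trmxC m n (A : 'M[C]_(m, n)) : A \is a realmx -> A ^t* = A^T.
Proof. by move=> /realmxC; rewrite -map_trmx => ->. Qed.

Lemma stiefel_mul_orthogonal r n (U : 'M[C]_(n, r)) (W : 'M[C]_r) :
  stiefel U -> W \is a realmx -> W \is unitarymx -> stiefel (U *m W).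
Proof.
move=> [Ureal UtU] Wreal /unitarymxP; rewrite realmx_trmxC // => WWt.
split; first exact: mxOverM.
by rewrite trmx_mul mulmxA -(mulmxA _ _ U) UtU mulmx1 (mulmx1C WWt).
Qed.

Lemma Sigma11P_gram r m p (Psi P : 'M[C]_(r + m)) (K : 'M[C]_(r, p)) :
  (Psi *m P *m col_mx K 0) ^t* *m (Psi *m P *m col_mx K 0)
    = K ^t* *m Sigma11P Psi P *m K.
Proof.
rewrite !trmx_mul !map_mxM tr_col_mx map_row_mx trmx0 map_mx0.
by rewrite -mul_row_mx0_col_mx0 /Sigma11P /SigmaP !mulmxA.
Qed.

Lemma hermitian_sqrt_unitary_factor n (S K : 'M[C]_n) :
  S ^t* = S -> S \in unitmx -> S *m S = K *m K ^t* ->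
  invmx S *m K \is unitarymx.
Proof.
move=> Sherm Su SSE; apply/unitarymxP.
have SiC : (invmx S) ^t* = invmx S.
  by rewrite -map_trmx map_invmx trmx_inv map_trmx Sherm.
rewrite trmx_mul map_mxM SiC !mulmxA -(mulmxA _ K) -SSE.
by rewrite mulmxA mulVmx // mul1mx mulmxV.
Qed.

End ComplexMatrices.

Theorem lemma2 (C : numClosedFieldType) (r m : nat)
  (hr : (1 <= r)%N) (hm : (1 <= m)%N)
  (A : 'M[C]_(r + m)) (Psi : 'M[C]_(r + m))
  (hA : A \is a realmx)
  (hPsi : Psi \in unitmx)
  (hcols : forall j : 'I_(r + m),
      unit_normcv (col j Psi) /\ gen_eigenvector A (col j Psi))
  (U : 'M[C]_(r + m, r)) (hU : stiefel U)
  (P : 'M[C]_(r + m)) (hP : P \is unitarymx)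
  (K : 'M[C]_r) (hK : K \in unitmx)
  (hdec : invmx Psi *m U = P *m col_mx K 0)
  (S : 'M[C]_r) (hS : inv_sqrtmx (Sigma11P Psi P) S) :
  exists WP : 'M[C]_r,
    WP \is unitarymx /\ K = S *m WP /\
    forall W : 'M[C]_r, W \is a realmx -> W \is unitarymx ->
      Psi *m P *m col_mx (S *m WP *m W) 0 = U *m W /\ stiefel (U *m W).
Proof.
have UE : U = Psi *m P *m col_mx K 0 by rewrite -mulmxA -hdec mulKVmx.
have [[[Sherm _] SS] [Ureal UtU]] := (hS, hU).
have gramK : K ^t* *m Sigma11P Psi P *m K = 1%:M.
  by rewrite -Sigma11P_gram -UE realmx_trmxC.
have /mulmx1_sandwich SigmaKKt := gramK.
have [Sigma_u _] := mulmx1_unit SigmaKKt.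
have Su : S \in unitmx.
  by move: (unitmx_inv (Sigma11P Psi P)); rewrite -SS Sigma_u unitmx_mul => /andP[].
have SSE : S *m S = K *m K ^t* by rewrite SS; apply: invmx_mulmx1.
exists (invmx S *m K); rewrite mulKVmx //.
split; first exact: hermitian_sqrt_unitary_factor.
split=> // W Wreal Wu; split; last exact: stiefel_mul_orthogonal.
by rewrite UE -!mulmxA mul_col_mx mul0mx.
Qed.
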